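(* Let an abstract group $Q$ act on a category $\mathcal C$, where $Q$ fits into a short exact sequence $1\to Q'\to Q\xrightarrow{\pi} Q''\to1$ (identify $Q'$ with a normal subgroup of $Q$). Suppose given an action of $Q''$ on $\mathcal C^{Q'}$, and consider two $Q$-actions on $\mathcal C^{Q'}$: (A) the canonical one induced from the $Q$-action on $\mathcal C$, and (B) the one obtained by pulling back the $Q''$-action along $\pi$. Suppose given an isomorphism of actions $\gamma$ from (A) to (B) whose restriction to $Q'$ coincides with the canonical trivialization of the canonical $Q'$-action on $\mathcal C^{Q'}$. Then there is a canonical equivalence of categories $\mathcal C^Q\simeq(\mathcal C^{Q'})^{Q''}$.
   Context: An action of an abstract group $Q$ on a category $\mathcal C$ consists of functors $q\cdot-$, natural isomorphisms $1_Q\cdot-\cong\mathrm{id}$ and $q_2\cdot(q_1\cdot -)\cong (q_2q_1)\cdot -$ satisfying the usual coherence conditions; these are written as equalities. $\mathcal C^Q$ is the category of pairs $(C,\alpha)$ with isomorphisms $\alpha_q\colon q\cdot C\to C$, $\alpha_{1_Q}$ the unit isomorphism and $\alpha_{q_2}\circ(q_2\cdot\alpha_{q_1})=\alpha_{q_2q_1}$; morphisms are maps $\phi$ in $\mathcal C$ with $\alpha_{2,q}\circ(q\cdot\phi)=\phi\circ\alpha_{1,q}$. For normal $Q'\le Q$, the canonical $Q$-action on $\mathcal C^{Q'}$ is $q\cdot(C,\alpha)=(q\cdot C,{}^q\alpha)$, ${}^q\alpha_{q'}=q\cdot\alpha_{q^{-1}q'q}\colon q'\cdot(q\cdot C)=q\cdot(q^{-1}q'q\cdot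 C)\to q\cdot C$. An isomorphism between two $Q$-actions $\cdot_A,\cdot_B$ on a category is a family of natural isomorphisms $\gamma_q\colon q\cdot_A-\to q\cdot_B-$ with $\gamma_{1_Q}$ compatible with the identifications with the identity, and $\gamma_{q_2q_1}=\gamma_{q_2}\circ(q_2\cdot_A\gamma_{q_1})$ under the identifications $(q_2q_1)\cdot_A-=q_2\cdot_A(q_1\cdot_A-)$ and $(q_2q_1)\cdot_B-=q_2\cdot_B(q_1\cdot_B-)$ (more precisely, the component at an object $X$ of $\gamma_{q_2}$ being taken at $q_1\cdot_B X$). A trivialization is an isomorphism to the trivial action ($q\cdot-=\mathrm{id}$ for all $q$). For any $Q$-action on $\mathcal C$, the canonical $Q$-action on $\mathcal C^Q$ has the canonical trivialization given on $(C,\alpha)$ by the isomorphisms $\alpha_{q_0}\colon q_0\cdot(C,\alpha)\to(C,\alpha)$ in $\mathcal C^Q$, $q_0\in Q$. *)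

From Stdlib Require Import ProofIrrelevance.

Record Category := {
  Obj :> Type;
  Hom : Obj -> Obj -> Type;
  idm : forall a, Hom a a;
  comp : forall a b c, Hom b c -> Hom a b -> Hom a c;
  comp_idl : forall a b (f : Hom a b), comp _ _ _ (idm b) f = f;
  comp_idr : forall a b (f : Hom a b), comp _ _ _ f (idm a) = f;
  comp_assoc : forall a b c d (h : Hom c d) (g : Hom b c) (f : Hom a b),
      comp _ _ _ h (comp _ _ _ g f) = comp _ _ _ (comp _ _ _ h g) f }.

Arguments Hom {C} a b : rename.
Arguments idm {C} a : rename.
Arguments comp {C a b c} g f : rename.

Definition is_inverse {C : Category} {a b : C} (f : Hom a b) (g : Hom b a) : Prop :=
  comp g f = idm a /\ comp f g = idm b.

Record Functor (C D : Category) := {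
  fobj :> C -> D;
  fmap : forall a b, Hom a b -> Hom (fobj a) (fobj b);
  fmap_id : forall a, fmap a a (idm a) = idm (fobj a);
  fmap_comp : forall a b c (g : Hom b c) (f : Hom a b),
      fmap a c (comp g f) = comp (fmap b c g) (fmap a b f) }.

Arguments fobj {C D} F a : rename.
Arguments fmap {C D} F {a b} f : rename.

Definition IdF (C : Category) : Functor C C.
Proof.
  refine {| fobj := fun a => a; fmap := fun a b f => f |}.
  - reflexivity.
  - reflexivity.
Defined.

Definition CompF {C D E : Category} (G : Functor D E) (F : Functor C D) : Functor C E.
Proof.
  refine {| fobj := fun a => G (F a); fmap := fun a b f => fmap G (fmap F f) |}.
  - intro a. rewrite fmap_id. apply fmap_id.
  - intros a b c g f. rewrite fmap_comp. apply fmap_comp.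
Defined.

Record NatIso {C D : Category} (F G : Functor C D) := {
  ni_hom : forall a, Hom (F a) (G a);
  ni_inv : forall a, Hom (G a) (F a);
  ni_natural : forall a b (f : Hom a b),
      comp (fmap G f) (ni_hom a) = comp (ni_hom b) (fmap F f);
  ni_inverse : forall a, is_inverse (ni_hom a) (ni_inv a) }.

Arguments ni_hom {C D F G} n a : rename.
Arguments ni_inv {C D F G} n a : rename.

Record Group := {
  G_carrier :> Type;
  gmul : G_carrier -> G_carrier -> G_carrier;
  gone : G_carrier;
  ginv : G_carrier -> G_carrier;
  gmulA : forall x y z, gmul x (gmul y z) = gmul (gmul x y) z;
  gmul1 : forall x, gmul gone x = x;
  gmulV : forall x, gmul (ginv x) x = gone }.

Arguments gmul {g} x y : rename.
Arguments gone {g} : rename.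
Arguments ginv {g} x : rename.
Arguments gmulA {g} x y z : rename.
Arguments gmul1 {g} x : rename.
Arguments gmulV {g} x : rename.

Lemma gmulVr (G : Group) (x : G) : gmul x (ginv x) = gone.
Proof.
  assert (h : gmul (ginv (ginv x)) (gmul (ginv x) (gmul x (ginv x))) = gmul x (ginv x)).
  { rewrite gmulA, gmulV. apply gmul1. }
  rewrite <- h. rewrite (gmulA (ginv x) x), gmulV, gmul1. apply gmulV.
Qed.

Lemma gmul1r (G : Group) (x : G) : gmul x gone = x.
Proof.
  rewrite <- (gmulV x). rewrite gmulA, gmulVr. apply gmul1.
Qed.

Record GroupHom (G H : Group) := {
  ghom :> G -> H;
  ghom_mul : forall x y, ghom (gmul x y) = gmul (ghom x) (ghom y) }.

Arguments ghom {G H} f x : rename.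
Arguments ghom_mul {G H} f x y : rename.

Lemma ghom_one {G H : Group} (f : GroupHom G H) : f gone = gone.
Proof.
  assert (h : f gone = gmul (f gone) (f gone)).
  { rewrite <- ghom_mul. rewrite gmul1. reflexivity. }
  transitivity (gmul (ginv (f gone)) (gmul (f gone) (f gone))).
  - rewrite gmulA, gmulV, gmul1. reflexivity.
  - rewrite <- h. apply gmulV.
Qed.

Section Kernel.
Context {Q Q2 : Group} (pi : GroupHom Q Q2).

Definition KerCarrier := { q : Q | pi q = gone }.

Lemma ker_mul_proof (x y : Q) : pi x = gone -> pi y = gone -> pi (gmul x y) = gone.
Proof. intros hx hy. rewrite ghom_mul, hx, hy. apply gmul1. Qed.

Lemma ker_inv_proof (x : Q) : pi x = gone -> pi (ginv x) = gone.
Proof.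
  intro hx. transitivity (gmul (pi (ginv x)) (pi x)).
  - rewrite hx. symmetry. apply gmul1r.
  - rewrite <- ghom_mul, gmulV. apply ghom_one.
Qed.

Definition ker_mul (x y : KerCarrier) : KerCarrier :=
  exist _ (gmul (proj1_sig x) (proj1_sig y))
        (ker_mul_proof _ _ (proj2_sig x) (proj2_sig y)).
Definition ker_one : KerCarrier := exist _ gone (ghom_one pi).
Definition ker_inv (x : KerCarrier) : KerCarrier :=
  exist _ (ginv (proj1_sig x)) (ker_inv_proof _ (proj2_sig x)).

Lemma ker_mulA x y z : ker_mul x (ker_mul y z) = ker_mul (ker_mul x y) z.
Proof. apply subset_eq_compat. apply gmulA. Qed.
Lemma ker_mul1 x : ker_mul ker_one x = x.
Proof. destruct x as [x hx]. apply subset_eq_compat. apply gmul1. Qed.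
Lemma ker_mulV x : ker_mul (ker_inv x) x = ker_one.
Proof. apply subset_eq_compat. apply gmulV. Qed.

Definition KerGroup : Group :=
  {| G_carrier := KerCarrier; gmul := ker_mul; gone := ker_one; ginv := ker_inv;
     gmulA := ker_mulA; gmul1 := ker_mul1; gmulV := ker_mulV |}.

Lemma conj_ker_proof (q : Q) (k : KerGroup) :
  pi (gmul (ginv q) (gmul (proj1_sig k) q)) = gone.
Proof.
  rewrite !ghom_mul, (proj2_sig k), gmul1, <- ghom_mul, gmulV. apply ghom_one.
Qed.

Definition conjK (q : Q) (k : KerGroup) : KerGroup :=
  exist _ (gmul (ginv q) (gmul (proj1_sig k) q)) (conj_ker_proof q k).

Lemma conjK_eq (q : Q) (k : KerGroup) :
  gmul (proj1_sig k) q = gmul q (proj1_sig (conjK q k)).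
Proof. simpl. rewrite gmulA, gmulVr. symmetry. apply gmul1. Qed.

End Kernel.

Record ActionData (G : Group) (C : Category) := {
  act : G -> Functor C C;
  act_unit : NatIso (act gone) (IdF C);
  act_mu : forall g2 g1 : G, NatIso (CompF (act g2) (act g1)) (act (gmul g2 g1)) }.

Arguments act {G C} A g : rename.
Arguments act_unit {G C} A : rename.
Arguments act_mu {G C} A g2 g1 : rename.

Definition eqmap {G : Group} {C : Category} (A : ActionData G C) {g h : G}
  (e : g = h) (X : C) : Hom (act A g X) (act A h X) :=
  match e in _ = h' return Hom (act A g X) (act A h' X) with
  | eq_refl => idm _
  end.

Definition ActionCoherent {G : Group} {C : Category} (A : ActionData G C) : Prop :=
  (forall (g3 g2 g1 : G) (X : C),
      comp (eqmap A (gmulA g3 g2 g1) X)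
           (comp (ni_hom (act_mu A g3 (gmul g2 g1)) X)
                 (fmap (act A g3) (ni_hom (act_mu A g2 g1) X)))
      = comp (ni_hom (act_mu A (gmul g3 g2) g1) X)
             (ni_hom (act_mu A g3 g2) (act A g1 X)))
  /\ (forall (g : G) (X : C),
      comp (eqmap A (gmul1 g) X) (ni_hom (act_mu A gone g) X)
      = ni_hom (act_unit A) (act A g X))
  /\ (forall (g : G) (X : C),
      comp (eqmap A (gmul1r G g) X) (ni_hom (act_mu A g gone) X)
      = fmap (act A g) (ni_hom (act_unit A) X)).

Section Equivariant.
Context {G : Group} {C : Category} (A : ActionData G C).

Record EqObj := {
  eo_obj : C;
  eo_str : forall g : G, Hom (act A g eo_obj) eo_obj;
  eo_iso : forall g, exists inv, is_inverse (eo_str g) inv;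
  eo_unit : eo_str gone = ni_hom (act_unit A) eo_obj;
  eo_cocycle : forall g2 g1,
      comp (eo_str g2) (fmap (act A g2) (eo_str g1))
      = comp (eo_str (gmul g2 g1)) (ni_hom (act_mu A g2 g1) eo_obj) }.

Definition is_eqmor (X Y : EqObj) (phi : Hom (eo_obj X) (eo_obj Y)) : Prop :=
  forall g, comp (eo_str Y g) (fmap (act A g) phi) = comp phi (eo_str X g).

Definition EqHom (X Y : EqObj) := { phi : Hom (eo_obj X) (eo_obj Y) | is_eqmor X Y phi }.

Lemma eqmor_id (X : EqObj) : is_eqmor X X (idm _).
Proof. intro g. rewrite fmap_id, comp_idl, comp_idr. reflexivity. Qed.

Lemma eqmor_comp (X Y Z : EqObj) (f : EqHom Y Z) (g : EqHom X Y) :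
  is_eqmor X Z (comp (proj1_sig f) (proj1_sig g)).
Proof.
  destruct f as [f hf], g as [g hg]. intro h. simpl.
  rewrite fmap_comp, comp_assoc, hf, <- comp_assoc, hg, comp_assoc. reflexivity.
Qed.

Definition eq_idm (X : EqObj) : EqHom X X := exist _ (idm _) (eqmor_id X).
Definition eq_comp (X Y Z : EqObj) (f : EqHom Y Z) (g : EqHom X Y) : EqHom X Z :=
  exist _ (comp (proj1_sig f) (proj1_sig g)) (eqmor_comp X Y Z f g).

Lemma eq_comp_idl X Y (f : EqHom X Y) : eq_comp _ _ _ (eq_idm Y) f = f.
Proof. destruct f. apply subset_eq_compat. apply comp_idl. Qed.
Lemma eq_comp_idr X Y (f : EqHom X Y) : eq_comp _ _ _ f (eq_idm X) = f.
Proof. destruct f. apply subset_eq_compat. apply comp_idr. Qed.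
Lemma eq_comp_assoc X Y Z W (h : EqHom Z W) (g : EqHom Y Z) (f : EqHom X Y) :
  eq_comp _ _ _ h (eq_comp _ _ _ g f) = eq_comp _ _ _ (eq_comp _ _ _ h g) f.
Proof. apply subset_eq_compat. apply comp_assoc. Qed.

Definition EquivCat : Category :=
  {| Obj := EqObj; Hom := EqHom; idm := eq_idm; comp := eq_comp;
     comp_idl := eq_comp_idl; comp_idr := eq_comp_idr; comp_assoc := eq_comp_assoc |}.

End Equivariant.

Definition mor {G : Group} {C : Category} {A : ActionData G C} {X Y : EquivCat A}
  (f : @Hom (EquivCat A) X Y) : Hom (eo_obj A X) (eo_obj A Y) := proj1_sig f.

Definition resK {Q Q2 : Group} (pi : GroupHom Q Q2) {C : Category}
  (A : ActionData Q C) : ActionData (KerGroup pi) C :=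
  {| act := fun k : KerGroup pi => act A (proj1_sig k);
     act_unit := act_unit A;
     act_mu := fun k2 k1 : KerGroup pi => act_mu A (proj1_sig k2) (proj1_sig k1) |}.

(* The structure  ^q alpha  of the object  q . (X, alpha)  for the canonical
   Q-action (A) on C^{Q'}:
     ^q alpha_k = q . alpha_{q^{-1} k q}  :  k.(q.X) = q.((q^{-1}kq).X) --> q.X,
   where the identification k.(q.X) = q.((q^{-1}kq).X) is the composite
     k.(q.X) --mu--> (kq).X = (q (q^{-1}kq)).X --mu^{-1}--> q.((q^{-1}kq).X). *)
Definition twisted_str {Q Q2 : Group} (pi : GroupHom Q Q2) {C : Category}
  (A : ActionData Q C) (q : Q) (X : EqObj (resK pi A)) (k : KerGroup pi) :
  Hom (act A (proj1_sig k) (act A q (eo_obj _ X))) (act A q (eo_obj _ X)) :=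
  comp (fmap (act A q) (eo_str _ X (conjK pi q k)))
   (comp (ni_inv (act_mu A q (proj1_sig (conjK pi q k))) (eo_obj _ X))
     (comp (eqmap A (conjK_eq pi q k) (eo_obj _ X))
           (ni_hom (act_mu A (proj1_sig k) q) (eo_obj _ X)))).

(* gamma is an isomorphism of Q-actions on C^{Q'} from
     (A) the canonical action  q . (X, alpha) = (q . X, ^q alpha)
   to
     (B) the pull-back along pi of the Q''-action B2,
   described through underlying morphisms in C (a morphism of C^{Q'} is a
   morphism of C satisfying the compatibility equation, and the functors /
   coherence isomorphisms of (A) have as underlying data those of the
   Q-action on C); and the restriction of gamma to Q' is the canonical
   trivialization alpha of the canonical Q'-action, where the pull-back of B2
   to Q' is identified with the trivial action via  pi k = 1  and the unit
   isomorphism of B2. *)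
Definition IsCanonicalActionIso {Q Q2 : Group} (pi : GroupHom Q Q2) {C : Category}
  (A : ActionData Q C) (B2 : ActionData Q2 (EquivCat (resK pi A)))
  (gamma : forall (q : Q) (X : EqObj (resK pi A)),
      Hom (act A q (eo_obj _ X)) (eo_obj _ (act B2 (pi q) X))) : Prop :=
  (* gamma_q X is a morphism of C^{Q'} from (q.X, ^q alpha) to (pi q).X *)
  (forall q X k,
      comp (eo_str _ (act B2 (pi q) X) k) (fmap (act A (proj1_sig k)) (gamma q X))
      = comp (gamma q X) (twisted_str pi A q X k))
  (* ... which is an isomorphism in C^{Q'} *)
  /\ (forall q X, exists delta,
      is_inverse (gamma q X) delta /\
      forall k, comp (twisted_str pi A q X k) (fmap (act A (proj1_sig k)) delta)
                = comp delta (eo_str _ (act B2 (pi q) X) k))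
  /\ (forall q (X Y : EqObj (resK pi A)) (phi : @Hom (EquivCat (resK pi A)) X Y),
      comp (mor (fmap (act B2 (pi q)) phi)) (gamma q X)
      = comp (gamma q Y) (fmap (act A q) (mor phi)))
  /\ (forall X,
      comp (mor (ni_hom (act_unit B2) X))
           (comp (mor (eqmap B2 (ghom_one pi) X)) (gamma gone X))
      = ni_hom (act_unit A) (eo_obj _ X))
  /\ (forall q2 q1 X,
      comp (gamma (gmul q2 q1) X) (ni_hom (act_mu A q2 q1) (eo_obj _ X))
      = comp (mor (eqmap B2 (eq_sym (ghom_mul pi q2 q1)) X))
          (comp (mor (ni_hom (act_mu B2 (pi q2) (pi q1)) X))
            (comp (gamma q2 (act B2 (pi q1) X))
                  (fmap (act A q2) (gamma q1 X)))))
  (* the restriction of gamma to Q' is the canonical trivialization *)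
  /\ (forall (k : KerGroup pi) X,
      comp (mor (ni_hom (act_unit B2) X))
           (comp (mor (eqmap B2 (proj2_sig k) X)) (gamma (proj1_sig k) X))
      = eo_str _ X k).

Definition EquivalentCats (C D : Category) : Prop :=
  exists (F : Functor C D) (G : Functor D C),
    inhabited (NatIso (CompF G F) (IdF C)) /\ inhabited (NatIso (CompF F G) (IdF D)).

(* An equivalence  C^Q ~ (C^{Q'})^{Q''}  whose functor C^Q -> (C^{Q'})^{Q''}
   does not change the underlying object of C (as the canonical one does). *)
Definition CanonicalEquivalence {Q Q2 : Group} (pi : GroupHom Q Q2) {C : Category}
  (A : ActionData Q C) (B2 : ActionData Q2 (EquivCat (resK pi A))) : Prop :=
  exists (F : Functor (EquivCat A) (EquivCat B2)) (G : Functor (EquivCat B2) (EquivCat A)),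
    inhabited (NatIso (CompF G F) (IdF (EquivCat A)))
    /\ inhabited (NatIso (CompF F G) (IdF (EquivCat B2)))
    /\ (forall X : EqObj A, eo_obj _ (eo_obj _ (F X)) = eo_obj _ X).

From Stdlib Require Import ProofIrrelevance IndefiniteDescription.

(* An object (Y, beta) of (C^{Q'})^{Q''} becomes an object of C^Q through
   beta_{pi q} o gamma_q; this is the functor (C^{Q'})^{Q''} -> C^Q.
   Conversely, for (X, alpha) in C^Q put beta_{pi q} := alpha_q o gamma_q^{-1}.
   It is well defined because gamma restricts to alpha on Q': for k in Q' the
   structures alpha_{qk} o gamma_{qk}^{-1} and alpha_q o gamma_q^{-1} agree by
   the multiplicativity of gamma and the cocycle condition for alpha.  Both
   composites are the identity on underlying objects. *)

Section Isomorphisms.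
Context {C : Category}.

Definition is_iso {a b : C} (f : Hom a b) : Prop := exists g, is_inverse f g.

Lemma iso_cancel_r {a b c : C} (f : Hom a b) (x y : Hom b c) :
  is_iso f -> comp x f = comp y f -> x = y.
Proof.
  intros [g [_ fg]] e.
  rewrite <- (comp_idr _ _ _ x), <- (comp_idr _ _ _ y), <- fg, !comp_assoc, e.
  reflexivity.
Qed.

Lemma iso_comp {a b c : C} (f : Hom b c) (g : Hom a b) :
  is_iso f -> is_iso g -> is_iso (comp f g).
Proof.
  intros [f' [f'f ff']] [g' [g'g gg']]. exists (comp g' f'). split.
  - rewrite !comp_assoc, <- (comp_assoc _ _ _ _ _ g' f' f), f'f, comp_idr. exact g'g.
  - rewrite !comp_assoc, <- (comp_assoc _ _ _ _ _ f g g'), gg', comp_idr. exact ff'.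
Qed.

Lemma inverse_iso {a b : C} (f : Hom a b) (g : Hom b a) : is_inverse f g -> is_iso g.
Proof. intros [gf fg]. exists f. split; assumption. Qed.

End Isomorphisms.

Lemma iso_fmap {C D : Category} (F : Functor C D) {a b : C} (f : Hom a b) :
  is_iso f -> is_iso (fmap F f).
Proof.
  intros [g [gf fg]]. exists (fmap F g).
  split; rewrite <- fmap_comp; [rewrite gf | rewrite fg]; apply fmap_id.
Qed.

Section EquivariantObjects.
Context {G : Group} {C : Category} (A : ActionData G C).

Lemma eqhom_ext (X Y : EqObj A) (f g : EqHom A X Y) : proj1_sig f = proj1_sig g -> f = g.
Proof.
  destruct f as [f hf], g as [g hg]; simpl; intros <-.
  f_equal; apply proof_irrelevance.
Qed.

Lemma mor_comp (X Y Z : EquivCat A) (f : Hom Y Z) (g : Hom X Y) :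
  mor (comp f g) = comp (mor f) (mor g).
Proof. reflexivity. Qed.

Lemma mor_iso (X Y : EquivCat A) (f : Hom X Y) : is_iso f -> is_iso (mor f).
Proof.
  intros [g [gf fg]]. exists (mor g).
  split; [exact (f_equal (@proj1_sig _ _) gf) | exact (f_equal (@proj1_sig _ _) fg)].
Qed.

Lemma eqhom_iso (X Y : EquivCat A) (f : Hom X Y) : is_iso (mor f) -> is_iso f.
Proof.
  intros [g [gf fg]].
  assert (g_eq : is_eqmor A Y X g).
  { intro h. destruct f as [f f_eq]. simpl in *.
    apply (iso_cancel_r (fmap (act A h) f)).
    { apply iso_fmap. exists g; split; assumption. }
    rewrite <- comp_assoc, <- fmap_comp, gf, fmap_id, comp_idr.
    rewrite <- comp_assoc, f_eq, comp_assoc, gf, comp_idl. reflexivity. }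
  exists (exist _ g g_eq). split; apply eqhom_ext; assumption.
Qed.

Lemma eqmap_iso {g h : G} (e : g = h) (X : C) : is_iso (eqmap A e X).
Proof. destruct e. exists (idm _). split; apply comp_idl. Qed.

Lemma eqmap_sym {g h : G} (e : g = h) (X : C) :
  comp (eqmap A e X) (eqmap A (eq_sym e) X) = idm _.
Proof. destruct e. apply comp_idl. Qed.

Lemma eo_str_eqmap (X : EqObj A) {g h : G} (e : g = h) :
  comp (eo_str A X h) (eqmap A e (eo_obj A X)) = eo_str A X g.
Proof. destruct e. apply comp_idr. Qed.

(* The cocycle condition, applied on both sides of  k q = q c. *)
Lemma eo_str_conj (X : EqObj A) {q c k : G} (e : gmul k q = gmul q c) :
  comp (eo_str A X q) (comp (fmap (act A q) (eo_str A X c))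
    (comp (ni_inv (act_mu A q c) (eo_obj A X))
      (comp (eqmap A e (eo_obj A X)) (ni_hom (act_mu A k q) (eo_obj A X)))))
  = comp (eo_str A X k) (fmap (act A k) (eo_str A X q)).
Proof.
  rewrite comp_assoc, (eo_cocycle A X q c), <- comp_assoc.
  rewrite (comp_assoc _ _ _ _ _ (ni_hom _ _) (ni_inv _ _)).
  rewrite (proj2 (ni_inverse _ _ _ _)), comp_idl, comp_assoc, eo_str_eqmap.
  symmetry. apply eo_cocycle.
Qed.

Lemma act_unit_r_eqmap (HA : ActionCoherent A) {g h w : G}
  (h1 : h = gone) (e : gmul g h = w) (e' : g = w) (X : C) :
  comp (eqmap A e' X) (fmap (act A g) (comp (ni_hom (act_unit A) X) (eqmap A h1 X)))
  = comp (eqmap A e X) (ni_hom (act_mu A g h) X).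
Proof.
  subst h. destruct e'. simpl eqmap.
  rewrite (proof_irrelevance _ e (gmul1r G g)), comp_idr, comp_idl.
  symmetry. apply (proj2 (proj2 HA)).
Qed.

End EquivariantObjects.

Section Descent.
Variables (Q Q2 : Group) (pi : GroupHom Q Q2).
Hypothesis pi_surj : forall y : Q2, exists q : Q, pi q = y.
Variables (C : Category) (A : ActionData Q C).

Local Notation RA := (resK pi A).

Variable B2 : ActionData Q2 (EquivCat RA).
Hypothesis HB2 : ActionCoherent B2.

Variable gamma : forall (q : Q) (X : EqObj RA),
  Hom (act A q (eo_obj _ X)) (eo_obj _ (act B2 (pi q) X)).

Hypothesis gamma_equivariant : forall q X k,
  comp (eo_str _ (act B2 (pi q) X) k) (fmap (act A (proj1_sig k)) (gamma q X))
  = comp (gamma q X) (twisted_str pi A q X k).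
Hypothesis gamma_iso : forall q X, is_iso (gamma q X).
Hypothesis gamma_natural : forall q (X Y : EquivCat RA) (phi : Hom X Y),
  comp (mor (fmap (act B2 (pi q)) phi)) (gamma q X)
  = comp (gamma q Y) (fmap (act A q) (mor phi)).
Hypothesis gamma_unit : forall X,
  comp (mor (ni_hom (act_unit B2) X)) (comp (mor (eqmap B2 (ghom_one pi) X)) (gamma gone X))
  = ni_hom (act_unit A) (eo_obj _ X).
Hypothesis gamma_mul : forall q2 q1 X,
  comp (gamma (gmul q2 q1) X) (ni_hom (act_mu A q2 q1) (eo_obj _ X))
  = comp (mor (eqmap B2 (eq_sym (ghom_mul pi q2 q1)) X))
      (comp (mor (ni_hom (act_mu B2 (pi q2) (pi q1)) X))
        (comp (gamma q2 (act B2 (pi q1) X)) (fmap (act A q2) (gamma q1 X)))).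
Hypothesis gamma_ker : forall (k : KerGroup pi) X,
  comp (mor (ni_hom (act_unit B2) X)) (comp (mor (eqmap B2 (proj2_sig k) X)) (gamma (proj1_sig k) X))
  = eo_str _ X k.

Definition gamma_inv (q : Q) (X : EqObj RA) :
  Hom (eo_obj _ (act B2 (pi q) X)) (act A q (eo_obj _ X)) :=
  proj1_sig (constructive_indefinite_description _ (gamma_iso q X)).

Lemma gamma_invK q X : is_inverse (gamma q X) (gamma_inv q X).
Proof. exact (proj2_sig (constructive_indefinite_description _ (gamma_iso q X))). Qed.

(** * From (C^{Q'})^{Q''} to C^Q *)

Definition pull_str (Z : EqObj B2) (q : Q) :
  Hom (act A q (eo_obj RA (eo_obj B2 Z))) (eo_obj RA (eo_obj B2 Z)) :=
  comp (mor (eo_str B2 Z (pi q))) (gamma q (eo_obj B2 Z)).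

Lemma pull_str_iso Z q : is_iso (pull_str Z q).
Proof. apply iso_comp; [apply mor_iso, (eo_iso B2 Z) | apply gamma_iso]. Qed.

Lemma pull_str_unit Z : pull_str Z gone = ni_hom (act_unit A) (eo_obj RA (eo_obj B2 Z)).
Proof.
  unfold pull_str.
  rewrite <- (eo_str_eqmap B2 Z (ghom_one pi)), (eo_unit B2 Z), mor_comp, <- comp_assoc.
  apply gamma_unit.
Qed.

Lemma pull_str_cocycle Z q2 q1 :
  comp (pull_str Z q2) (fmap (act A q2) (pull_str Z q1))
  = comp (pull_str Z (gmul q2 q1)) (ni_hom (act_mu A q2 q1) (eo_obj RA (eo_obj B2 Z))).
Proof.
  unfold pull_str. rewrite fmap_comp.
  rewrite <- comp_assoc, (comp_assoc _ _ _ _ _ (gamma q2 _)), <- gamma_natural.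
  rewrite <- comp_assoc, comp_assoc, <- mor_comp, (eo_cocycle B2 Z), mor_comp.
  rewrite <- (eo_str_eqmap B2 Z (eq_sym (ghom_mul pi q2 q1))), mor_comp, <- !comp_assoc.
  f_equal. symmetry. apply gamma_mul.
Qed.

Definition pull_obj (Z : EqObj B2) : EqObj A :=
  @Build_EqObj _ _ A (eo_obj RA (eo_obj B2 Z)) (pull_str Z)
    (pull_str_iso Z) (pull_str_unit Z) (pull_str_cocycle Z).

Lemma pull_str_ker Z (k : KerGroup pi) : pull_str Z (proj1_sig k) = eo_str RA (eo_obj B2 Z) k.
Proof.
  unfold pull_str.
  rewrite <- (eo_str_eqmap B2 Z (proj2_sig k)), (eo_unit B2 Z), mor_comp, <- comp_assoc.
  apply gamma_ker.
Qed.

(* Since pi is onto and every gamma_q is invertible, equivariance for B2 can be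
   tested on the pulled-back structures. *)
Lemma eqmor_pull (Z W : EqObj B2) (f : Hom (eo_obj B2 Z) (eo_obj B2 W)) :
  is_eqmor B2 Z W f <-> is_eqmor A (pull_obj Z) (pull_obj W) (mor f).
Proof.
  assert (pull_natural : forall q,
    comp (pull_str W q) (fmap (act A q) (mor f))
    = comp (mor (eo_str B2 W (pi q))) (comp (mor (fmap (act B2 (pi q)) f)) (gamma q _))).
  { intro q. unfold pull_str. rewrite gamma_natural, comp_assoc. reflexivity. }
  split.
  - intros f_eq q. simpl. rewrite pull_natural, comp_assoc, <- mor_comp, f_eq.
    unfold pull_str. rewrite mor_comp, comp_assoc. reflexivity.
  - intros f_eq y. apply eqhom_ext. destruct (pi_surj y) as [q <-].
    apply (iso_cancel_r (gamma q (eo_obj B2 Z))); [apply gamma_iso|].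
    change (proj1_sig ?g) with (mor g). rewrite !mor_comp, <- !comp_assoc.
    rewrite <- pull_natural. exact (f_eq q).
Qed.

Definition pull_hom (Z W : EqObj B2) (f : EqHom B2 Z W) : EqHom A (pull_obj Z) (pull_obj W) :=
  exist _ (mor (proj1_sig f)) (proj1 (eqmor_pull Z W _) (proj2_sig f)).

Definition Pull : Functor (EquivCat B2) (EquivCat A).
Proof.
  refine (@Build_Functor (EquivCat B2) (EquivCat A) pull_obj pull_hom _ _).
  - intro Z. apply eqhom_ext. reflexivity.
  - intros Z W V g f. apply eqhom_ext. reflexivity.
Defined.

(** * From C^Q to (C^{Q'})^{Q''} *)

Definition res_obj (X : EqObj A) : EqObj RA :=
  @Build_EqObj _ _ RA (eo_obj A X)
    (fun k : KerGroup pi => eo_str A X (proj1_sig k))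
    (fun k : KerGroup pi => eo_iso A X (proj1_sig k))
    (eo_unit A X)
    (fun k2 k1 : KerGroup pi => eo_cocycle A X (proj1_sig k2) (proj1_sig k1)).

Definition res_hom (X Y : EqObj A) (f : EqHom A X Y) : @Hom (EquivCat RA) (res_obj X) (res_obj Y) :=
  exist (is_eqmor RA (res_obj X) (res_obj Y)) (proj1_sig f) (fun k : KerGroup pi => proj2_sig f (proj1_sig k)).

Lemma gamma_shift_ker (Y : EqObj RA) (q : Q) (k : KerGroup pi)
  (e : pi q = pi (gmul q (proj1_sig k))) :
  comp (mor (eqmap B2 e Y)) (comp (gamma q Y) (fmap (act A q) (eo_str RA Y k)))
  = comp (gamma (gmul q (proj1_sig k)) Y) (ni_hom (act_mu A q (proj1_sig k)) (eo_obj RA Y)).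
Proof.
  set (U := comp (ni_hom (act_unit B2) Y) (eqmap B2 (proj2_sig k) Y)).
  assert (str_k : eo_str RA Y k = comp (mor U) (gamma (proj1_sig k) Y)).
  { rewrite <- gamma_ker, comp_assoc. reflexivity. }
  rewrite str_k, fmap_comp, (comp_assoc _ _ _ _ _ (gamma q Y)), <- gamma_natural.
  rewrite gamma_mul, !comp_assoc, <- !mor_comp.
  rewrite <- (act_unit_r_eqmap B2 HB2 (proj2_sig k) _ e Y). reflexivity.
Qed.

Definition lift (y : Q2) : Q := proj1_sig (constructive_indefinite_description _ (pi_surj y)).

Lemma pi_lift y : pi (lift y) = y.
Proof. exact (proj2_sig (constructive_indefinite_description _ (pi_surj y))). Qed.

Definition descend_map (X : EqObj A) (y : Q2) :
  Hom (eo_obj RA (act B2 y (res_obj X))) (eo_obj A X) :=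
  comp (eo_str A X (lift y))
    (comp (gamma_inv (lift y) (res_obj X)) (mor (eqmap B2 (eq_sym (pi_lift y)) (res_obj X)))).

Lemma eo_str_gamma_fiber (X : EqObj A) (q q' : Q) (e : pi q = pi q') :
  comp (eo_str A X q')
    (comp (gamma_inv q' (res_obj X)) (comp (mor (eqmap B2 e (res_obj X))) (gamma q (res_obj X))))
  = eo_str A X q.
Proof.
  assert (in_ker : pi (gmul (ginv q) q') = gone).
  { rewrite ghom_mul, <- e, <- ghom_mul, gmulV. apply ghom_one. }
  set (k := exist _ (gmul (ginv q) q') in_ker : KerGroup pi).
  assert (q'_eq : gmul q (proj1_sig k) = q').
  { simpl. rewrite gmulA, gmulVr. apply gmul1. }
  revert e. rewrite <- q'_eq. intro e.
  apply (iso_cancel_r (fmap (act A q) (eo_str A X (proj1_sig k)))).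
  { apply iso_fmap, eo_iso. }
  rewrite (eo_cocycle A X q), <- !comp_assoc. f_equal.
  transitivity (comp (gamma_inv _ (res_obj X))
    (comp (gamma (gmul q (proj1_sig k)) (res_obj X)) (ni_hom (act_mu A q (proj1_sig k)) (eo_obj A X)))).
  { f_equal. exact (gamma_shift_ker (res_obj X) q k e). }
  rewrite comp_assoc, (proj1 (gamma_invK _ _)). apply comp_idl.
Qed.

Lemma descend_map_gamma X q : comp (descend_map X (pi q)) (gamma q (res_obj X)) = eo_str A X q.
Proof.
  unfold descend_map. rewrite <- !comp_assoc.
  apply eo_str_gamma_fiber.
Qed.

Lemma descend_map_gamma_eqmap X q y (e : pi q = y) :
  comp (descend_map X y) (comp (mor (eqmap B2 e (res_obj X))) (gamma q (res_obj X)))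
  = eo_str A X q.
Proof. destruct e. rewrite comp_idl. apply descend_map_gamma. Qed.

Lemma descend_map_iso X y : is_iso (descend_map X y).
Proof.
  apply iso_comp; [apply eo_iso|]. apply iso_comp.
  - exact (inverse_iso _ _ (gamma_invK _ _)).
  - apply mor_iso, eqmap_iso.
Qed.

Lemma descend_map_eqmor X y : is_eqmor RA (act B2 y (res_obj X)) (res_obj X) (descend_map X y).
Proof.
  intro k. destruct (pi_surj y) as [q <-].
  apply (iso_cancel_r (fmap (act A (proj1_sig k)) (gamma q (res_obj X)))).
  { apply iso_fmap, gamma_iso. }
  rewrite <- !comp_assoc, gamma_equivariant.
  change (fmap (act RA k) (descend_map X (pi q)))
    with (fmap (act A (proj1_sig k)) (descend_map X (pi q))).
  rewrite <- fmap_comp, descend_map_gamma, comp_assoc, descend_map_gamma.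
  symmetry. exact (eo_str_conj A X (conjK_eq pi q k)).
Qed.

Definition descend_str X y : @Hom (EquivCat RA) (act B2 y (res_obj X)) (res_obj X) :=
  exist _ (descend_map X y) (descend_map_eqmor X y).

Lemma descend_str_unit X : descend_str X gone = ni_hom (act_unit B2) (res_obj X).
Proof.
  apply eqhom_ext.
  apply (iso_cancel_r (comp (mor (eqmap B2 (ghom_one pi) (res_obj X))) (gamma gone (res_obj X)))).
  { apply iso_comp; [apply mor_iso, eqmap_iso | apply gamma_iso]. }
  simpl proj1_sig. rewrite descend_map_gamma_eqmap, (eo_unit A X).
  symmetry. apply gamma_unit.
Qed.

Lemma descend_str_cocycle X y2 y1 :
  comp (descend_str X y2) (fmap (act B2 y2) (descend_str X y1))
  = comp (descend_str X (gmul y2 y1)) (ni_hom (act_mu B2 y2 y1) (res_obj X)).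
Proof.
  apply eqhom_ext. change (proj1_sig ?f) with (mor f). rewrite !mor_comp.
  destruct (pi_surj y2) as [q2 <-], (pi_surj y1) as [q1 <-].
  apply (iso_cancel_r (comp (gamma q2 (act B2 (pi q1) (res_obj X)))
                            (fmap (act A q2) (gamma q1 (res_obj X))))).
  { apply iso_comp; [apply gamma_iso | apply iso_fmap, gamma_iso]. }
  transitivity (comp (eo_str A X (gmul q2 q1)) (ni_hom (act_mu A q2 q1) (eo_obj A X))).
  - rewrite <- !comp_assoc, (comp_assoc _ _ _ _ _ (mor (fmap _ _))), gamma_natural.
    rewrite <- comp_assoc, comp_assoc, descend_map_gamma, <- fmap_comp.
    simpl mor. rewrite descend_map_gamma. apply (eo_cocycle A X).
  - rewrite <- (descend_map_gamma_eqmap X _ _ (ghom_mul pi q2 q1)), <- !comp_assoc.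
    f_equal. change (eo_obj A X) with (eo_obj RA (res_obj X)). rewrite (gamma_mul q2 q1 (res_obj X)), comp_assoc.
    rewrite <- mor_comp, (eqmap_sym B2 (ghom_mul pi q2 q1)). apply comp_idl.
Qed.

Definition descend_obj (X : EqObj A) : EqObj B2 :=
  @Build_EqObj _ _ B2 (res_obj X) (descend_str X)
    (fun y => eqhom_iso _ _ _ (descend_str X y) (descend_map_iso X y))
    (descend_str_unit X) (descend_str_cocycle X).

Lemma pull_descend_str X q : eo_str A (pull_obj (descend_obj X)) q = eo_str A X q.
Proof. exact (descend_map_gamma X q). Qed.

Lemma descend_hom_eqmor (X Y : EqObj A) (f : EqHom A X Y) :
  is_eqmor B2 (descend_obj X) (descend_obj Y) (res_hom X Y f).
Proof.
  apply eqmor_pull. intro q. rewrite !pull_descend_str. exact (proj2_sig f q).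
Qed.

Definition Descend : Functor (EquivCat A) (EquivCat B2).
Proof.
  refine (@Build_Functor (EquivCat A) (EquivCat B2) descend_obj
    (fun X Y f => exist _ (res_hom X Y f) (descend_hom_eqmor X Y f)) _ _).
  - intro X. do 2 apply eqhom_ext. reflexivity.
  - intros X Y Z g f. do 2 apply eqhom_ext. reflexivity.
Defined.

Lemma pull_descend_eqmor X : is_eqmor A (pull_obj (descend_obj X)) X (idm _).
Proof. intro q. rewrite fmap_id, comp_idr, comp_idl. symmetry. apply pull_descend_str. Qed.

Lemma pull_descend_eqmor_inv X : is_eqmor A X (pull_obj (descend_obj X)) (idm _).
Proof. intro q. rewrite fmap_id, comp_idr, comp_idl. apply pull_descend_str. Qed.

Definition pull_descend_iso : NatIso (CompF Pull Descend) (IdF (EquivCat A)).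
Proof.
  refine (@Build_NatIso _ _ (CompF Pull Descend) (IdF (EquivCat A))
    (fun X => exist _ (idm _) (pull_descend_eqmor X))
    (fun X => exist _ (idm _) (pull_descend_eqmor_inv X)) _ _).
  - intros X Y f. apply eqhom_ext. simpl. rewrite comp_idl. apply comp_idr.
  - intro X. split; apply eqhom_ext; apply comp_idl.
Defined.

Definition res_pull_hom (Z : EqObj B2) : @Hom (EquivCat RA) (res_obj (pull_obj Z)) (eo_obj B2 Z).
Proof.
  refine (exist _ (idm _) _). intro k.
  rewrite fmap_id, comp_idr, comp_idl. symmetry. apply pull_str_ker.
Defined.

Definition res_pull_hom_inv (Z : EqObj B2) : @Hom (EquivCat RA) (eo_obj B2 Z) (res_obj (pull_obj Z)).
Proof.
  refine (exist _ (idm _) _). intro k.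
  rewrite fmap_id, comp_idr, comp_idl. apply pull_str_ker.
Defined.

Lemma descend_pull_eqmor Z : is_eqmor B2 (descend_obj (pull_obj Z)) Z (res_pull_hom Z).
Proof.
  apply eqmor_pull. intro q. simpl mor.
  rewrite fmap_id, comp_idr, comp_idl, pull_descend_str. reflexivity.
Qed.

Lemma descend_pull_eqmor_inv Z : is_eqmor B2 Z (descend_obj (pull_obj Z)) (res_pull_hom_inv Z).
Proof.
  apply eqmor_pull. intro q. simpl mor.
  rewrite fmap_id, comp_idr, comp_idl, pull_descend_str. reflexivity.
Qed.

Definition descend_pull_iso : NatIso (CompF Descend Pull) (IdF (EquivCat B2)).
Proof.
  refine (@Build_NatIso _ _ (CompF Descend Pull) (IdF (EquivCat B2))
    (fun Z => exist _ (res_pull_hom Z) (descend_pull_eqmor Z))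
    (fun Z => exist _ (res_pull_hom_inv Z) (descend_pull_eqmor_inv Z)) _ _).
  - intros Z W f. do 2 apply eqhom_ext. simpl. rewrite comp_idl. apply comp_idr.
  - intro Z. split; do 2 apply eqhom_ext; apply comp_idl.
Defined.

Lemma descent_equivalence : CanonicalEquivalence pi A B2.
Proof.
  exists Descend, Pull. split; [|split].
  - exact (inhabits pull_descend_iso).
  - exact (inhabits descend_pull_iso).
  - reflexivity.
Qed.

End Descent.

Theorem mainTheorem4
  (Q Q2 : Group) (pi : GroupHom Q Q2)
  (pi_surj : forall y : Q2, exists q : Q, pi q = y)
  (C : Category) (A : ActionData Q C) (HA : ActionCoherent A)
  (B2 : ActionData Q2 (EquivCat (resK pi A))) (HB2 : ActionCoherent B2)
  (gamma : forall (q : Q) (X : EqObj (resK pi A)),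
      Hom (act A q (eo_obj _ X)) (eo_obj _ (act B2 (pi q) X)))
  (Hgamma : IsCanonicalActionIso pi A B2 gamma) :
  CanonicalEquivalence pi A B2.
Proof.
  destruct Hgamma as (equivariant & invertible & natural & unit & mul & ker).
  apply (descent_equivalence Q Q2 pi pi_surj C A B2 HB2 gamma); try assumption.
  intros q X. destruct (invertible q X) as [delta [inverse _]]. exists delta. exact inverse.
Qed.
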